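(* Consider an instance of the Steiner Team Orienteering Problem as described in the context, and the linear programs $\mathcal{L}_1$ and $\mathcal{L}_2$ defined there. Then $\mathcal{L}_1$ and $\mathcal{L}_2$ are equivalent: for every feasible solution $(x,y,z,\varphi)$ of $\mathcal{L}_1$ there is a feasible solution $(x,y,f,\varphi)$ of $\mathcal{L}_2$ with the same $(x,y,\varphi)$ (hence the same objective value $\sum_{i\in P}p_iy_i$), and for every feasible solution $(x,y,f,\varphi)$ of $\mathcal{L}_2$ there is a feasible solution $(x,y,z,\varphi)$ of $\mathcal{L}_1$ with the same $(x,y,\varphi)$. In particular $\mathcal{L}_1$ and $\mathcal{L}_2$ have the same optimal value.
   Context: An instance of the Steiner Team Orienteering Problem (STOP) consists of: a digraph $G=(N,A)$; an origin $s\in N$ and a destination $t\in N$ with $s\neq t$; disjoint sets $S,P\subseteq N\setminus\{s,t\}$ (mandatory and profitable vertices) with $N=S\cup P\cup\{s,t\}$; rewards $p_i\in\mathbb{Z}^+$ for $i\in P$; traverse times $d_{ij}\in\mathbb{R}^+$ for $(i,j)\in A$; a number $m$ of vehicles and a time limit $T$. For $i\in N$ let $\delta^+(i)=\{j\in N:(i,j)\in A\}$ and $\delta^-(i)=\{j\in N:(j,i)\in A\}$. For $i,j\in N$, $R_{ij}$ denotes the minimum of $\sum_{a\in A_p}d_a$ over all paths $p$ from $i$ to $j$ in $G$ (with arc set $A_p$), and $R_{ii}=0$. Common constraints (C) on variables $x\in\mathbb{R}^A$, $y\in\mathbb{R}^N$, $\varphi\in\mathbb{R}$: (C1) $y_i=1$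 for all $i\in S\cup\{s,t\}$; (C2) $\sum_{j\in\delta^+(i)}x_{ij}=y_i$ for all $i\in S\cup P$; (C3) $\sum_{j\in\delta^+(s)}x_{sj}=\sum_{i\in\delta^-(t)}x_{it}=m-\varphi$; (C4) $\sum_{i\in\delta^-(s)}x_{is}=\sum_{j\in\delta^+(t)}x_{tj}=0$; (C5) $\sum_{j\in\delta^+(i)}x_{ij}-\sum_{j\in\delta^-(i)}x_{ji}=0$ for all $i\in S\cup P$; and $0\le\varphi\le m$. Formulation $\mathcal{F}_1$: maximize $\sum_{i\in P}p_iy_i$ over $(x,y,z,\varphi)$, $z\in\mathbb{R}^A$, subject to (C); $z_{sj}=d_{sj}x_{sj}$ for all $j\in\delta^+(s)$; $\sum_{j\in\delta^+(i)}z_{ij}-\sum_{j\in\delta^-(i)}z_{ji}=\sum_{j\in\delta^+(i)}d_{ij}x_{ij}$ for all $i\in S\cup P$; $z_{ij}\le(T-R_{jt})x_{ij}$ and $z_{ij}\ge(R_{si}+d_{ij})x_{ij}$ for all $(i,j)\in A$; $x\in\{0,1\}^A$, $y\in\{0,1\}^N$, $z\ge0$. Formulation $\mathcal{F}_2$: maximize $\sum_{i\in P}p_iy_i$ over $(x,y,f,\varphi)$, $f\in\mathbb{R}^A$, subject to (C); $f_{sj}=(T-d_{sj})x_{sj}$ for all $j\in\delta^+(s)$; $\sum_{j\in\delta^-(i)}f_{ji}-\sum_{j\in\delta^+(i)}f_{ij}=\sum_{j\in\delta^+(i)}d_{ij}x_{ij}$ for all $i\in S\cup P$; $f_{ij}\le(T-R_{si}-d_{ij})x_{ij}$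 for all $(i,j)\in A$ with $i\neq s$; $f_{ij}\ge R_{jt}x_{ij}$ for all $(i,j)\in A$; $x\in\{0,1\}^A$, $y\in\{0,1\}^N$, $f\ge0$. $\mathcal{L}_1$ and $\mathcal{L}_2$ are the linear relaxations of $\mathcal{F}_1$ and $\mathcal{F}_2$, obtained by replacing $x\in\{0,1\}^A$, $y\in\{0,1\}^N$ with $0\le x\le 1$, $0\le y\le 1$. *)

From HB Require Import structures.
From mathcomp Require Import all_boot all_order all_algebra.
From mathcomp Require Import all_classical all_reals.
From mathcomp Require Import ereal.

Set Implicit Arguments.
Unset Strict Implicit.
Unset Printing Implicit Defensive.

Import Order.TTheory GRing.Theory Num.Theory.
Local Open Scope ring_scope.

Section STOP.
Variables (R : realType) (N : finType) (A : rel N) (d : N -> N -> R).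

Definition is_path (i j : N) (p : seq N) : bool :=
  [&& path A i p, last i p == j & uniq (i :: p)].

Definition path_len (i : N) (p : seq N) : R :=
  \sum_(e <- zip (i :: p) p) d e.1 e.2.

(* R_ij: minimum path length from i to j (an extended real, +oo if no path;
   R_ii = 0 because the only path from i to i is the trivial one). *)
Definition Rdist (i j : N) : \bar R :=
  ereal_inf [set (path_len i p)%:E | p in [set p | is_path i j p]].

Variables (s t : N) (S P : {set N}) (m : nat).

Definition outsum (v : N -> N -> R) (i : N) : R := \sum_(j | A i j) v i j.
Definition insum (v : N -> N -> R) (i : N) : R := \sum_(j | A j i) v j i.

Definition common_C (x : N -> N -> R) (y : N -> R) (phi : R) : Prop :=
  [/\ (forall i, i \in S :|: [set s; t] -> y i = 1),
      (forall i, i \in S :|: P -> outsum x i = y i),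
      outsum x s = m%:R - phi /\ insum x t = m%:R - phi,
      insum x s = 0 /\ outsum x t = 0
    & (forall i, i \in S :|: P -> outsum x i - insum x i = 0)]
  /\ 0 <= phi <= m%:R.

Definition box (x : N -> N -> R) (y : N -> R) : Prop :=
  (forall i j, A i j -> 0 <= x i j <= 1) /\ (forall i, 0 <= y i <= 1).

Definition dx (x : N -> N -> R) : N -> N -> R := fun i j => d i j * x i j.

Local Open Scope ereal_scope.

Definition L1_feasible (T : R) (x : N -> N -> R) (y : N -> R)
    (z : N -> N -> R) (phi : R) : Prop :=
  [/\ common_C x y phi,
      (forall j, A s j -> z s j = (d s j * x s j)%R),
      (forall i, i \in S :|: P ->
         (outsum z i - insum z i = outsum (dx x) i)%R),
      (forall i j, A i j -> (z i j)%:E <= (T%:E - Rdist j t) * (x i j)%:E)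
    & (forall i j, A i j -> (z i j)%:E >= (Rdist s i + (d i j)%:E) * (x i j)%:E)]
  /\ box x y /\ (forall i j, A i j -> (0 <= z i j)%R).

Definition L2_feasible (T : R) (x : N -> N -> R) (y : N -> R)
    (f : N -> N -> R) (phi : R) : Prop :=
  [/\ common_C x y phi,
      (forall j, A s j -> f s j = ((T - d s j) * x s j)%R),
      (forall i, i \in S :|: P ->
         (insum f i - outsum f i = outsum (dx x) i)%R),
      (forall i j, A i j -> i != s ->
         (f i j)%:E <= (T%:E - Rdist s i - (d i j)%:E) * (x i j)%:E)
    & (forall i j, A i j -> (f i j)%:E >= Rdist j t * (x i j)%:E)]
  /\ box x y /\ (forall i j, A i j -> (0 <= f i j)%R).

End STOP.

Definition objective (R : realType) (N : finType) (P : {set N})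
    (p : N -> nat) (y : N -> R) : R :=
  \sum_(i in P) (p i)%:R * y i.

From HB Require Import structures.
From mathcomp Require Import all_boot all_order all_algebra.
From mathcomp Require Import all_classical all_reals.
From mathcomp Require Import ereal.
From mathcomp Require Import ring lra.
Set Implicit Arguments.
Unset Strict Implicit.
Unset Printing Implicit Defensive.

Import Order.TTheory GRing.Theory Num.Theory.
Local Open Scope ring_scope.

(* The two relaxations are related by the change of variables f = T x - z
   (time still available on arc (i, j) versus time already elapsed).  It
   turns the flow-conservation constraint on z into the one on f, and since
   f + z = T x each upper bound on z becomes a lower bound on f and vice
   versa, also when the bound involves an infinite distance R.  The only
   constraints without a counterpart are nonnegativity, implied by the lower
   bounds since R >= 0, and the L1 lower bound on arcs leaving s, which
   follows from f_sj = (T - d_sj) x_sj because R_ss = 0. *)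

Section ResidualBounds.
Variable R : realType.
Local Open Scope ereal_scope.

Lemma lee_mul_residual (a : \bar R) (c x u v : R) :
  (0 <= x)%R -> (u + v = c * x)%R ->
  v%:E <= (c%:E - a) * x%:E <-> a * x%:E <= u%:E.
Proof.
move=> x_ge0 uvE; have [x0|x_neq0] := eqVneq x 0%R.
  by move: uvE; rewrite x0 !mule0 !lee_fin mulr0; split; lra.
have x_gt0 : 0 < x%:E by rewrite lte_fin lt0r x_neq0.
case: a => [r| |] /=.
- by rewrite -EFinB -!EFinM !lee_fin; split; nra.
- by rewrite addeNy gt0_mulNye // gt0_mulye.
- by rewrite addey // gt0_mulNye // gt0_mulye //; split; rewrite ?leey ?leNye.
Qed.

Lemma lee_mul_residualD (a : \bar R) (b c x u v : R) :
  (0 <= x)%R -> (u + v = c * x)%R ->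
  (a + b%:E) * x%:E <= v%:E <-> u%:E <= (c%:E - a - b%:E) * x%:E.
Proof.
move=> x_ge0 uvE; rewrite -addeA -oppeD ?fin_num_adde_defl //.
by apply: iff_sym; apply: lee_mul_residual => //; rewrite addrC.
Qed.

End ResidualBounds.

Section Distances.
Variables (R : realType) (N : finType) (A : rel N) (d : N -> N -> R).
Hypothesis d_ge0 : forall i j, A i j -> 0 <= d i j.

Lemma path_len_ge0 i p : path A i p -> 0 <= path_len d i p.
Proof.
elim: p i => [|j p IHp] i /=; first by rewrite /path_len big_nil.
case/andP=> Aij Ap; rewrite /path_len /= big_cons /=.
by rewrite addr_ge0 ?d_ge0 ?IHp.
Qed.

Local Open Scope ereal_scope.

Lemma Rdist_ge0 i j : 0 <= Rdist A d i j.
Proof.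
apply: le_ereal_inf_tmp => _ [p /and3P[Ap _ _] <-].
by rewrite lee_fin path_len_ge0.
Qed.

Lemma Rdist_id i : Rdist A d i i = 0.
Proof.
apply/le_anti; rewrite Rdist_ge0 andbT.
apply: ge_ereal_inf; exists (path_len d i [::])%:E.
  by exists [::]; rewrite // /is_path /= eqxx.
by rewrite /path_len big_nil.
Qed.

End Distances.

Section Equivalence.
Variables (R : realType) (N : finType) (A : rel N) (d : N -> N -> R).
Variables (s t : N) (S P : {set N}) (m : nat) (T : R).
Hypothesis d_ge0 : forall i j, A i j -> 0 <= d i j.

Definition residual (x v : N -> N -> R) i j := T * x i j - v i j.

Lemma residual_balance x v i :
  outsum A x i - insum A x i = 0 ->
  insum A (residual x v) i - outsum A (residual x v) i =
    outsum A v i - insum A v i.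
Proof.
move/eqP; rewrite subr_eq0 => /eqP x_bal.
by rewrite /outsum /insum /residual !sumrB -!mulr_sumr -/(outsum A x i)
  -/(insum A x i) x_bal; ring.
Qed.

Lemma L1_feasible_residual x y z phi :
  L1_feasible A d s t S P m T x y z phi ->
  L2_feasible A d s t S P m T x y (residual x z) phi.
Proof.
move=> [[hC z_s z_bal z_ub z_lb] [[x_box y_box] _]].
have [[_ _ _ _ x_bal] _] := hC.
have x_ge0 i j : A i j -> 0 <= x i j by move=> /x_box /andP[].
have resE i j : residual x z i j + z i j = T * x i j by rewrite /residual subrK.
have f_lb i j : A i j -> (Rdist A d j t * (x i j)%:E <= (residual x z i j)%:E)%E.
  by move=> Aij; apply/(lee_mul_residual _ (x_ge0 _ _ Aij) (resE i j))/z_ub.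
split; [split|split] => //.
- by move=> j Asj; rewrite /residual z_s //; ring.
- by move=> i iSP; rewrite residual_balance ?z_bal ?x_bal.
- by move=> i j Aij _; apply/(lee_mul_residualD _ _ (x_ge0 _ _ Aij) (resE i j))/z_lb.
- move=> i j Aij; rewrite -lee_fin; apply: le_trans (f_lb _ _ Aij).
  by rewrite mule_ge0 ?Rdist_ge0 ?lee_fin ?x_ge0.
Qed.

Lemma L2_feasible_residual x y f phi :
  L2_feasible A d s t S P m T x y f phi ->
  L1_feasible A d s t S P m T x y (residual x f) phi.
Proof.
move=> [[hC f_s f_bal f_ub f_lb] [[x_box y_box] _]].
have [[_ _ _ _ x_bal] _] := hC.
have x_ge0 i j : A i j -> 0 <= x i j by move=> /x_box /andP[].
have resE i j : f i j + residual x f i j = T * x i j by rewrite /residual addrC subrK.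
have z_s j : A s j -> residual x f s j = d s j * x s j.
  by move=> Asj; rewrite /residual f_s //; ring.
have z_lb i j : A i j ->
    ((Rdist A d s i + (d i j)%:E) * (x i j)%:E <= (residual x f i j)%:E)%E.
  move=> Aij; have [i_s|i_neq_s] := eqVneq i s.
    by subst i; rewrite Rdist_id // add0e z_s.
  exact/(lee_mul_residualD _ _ (x_ge0 _ _ Aij) (resE i j))/f_ub.
split; [split|split] => //.
- by move=> i iSP; rewrite -opprB residual_balance ?x_bal // opprB f_bal.
- by move=> i j Aij; apply/(lee_mul_residual _ (x_ge0 _ _ Aij) (resE i j))/f_lb.
- move=> i j Aij; rewrite -lee_fin; apply: le_trans (z_lb _ _ Aij).
  by rewrite mule_ge0 ?adde_ge0 ?Rdist_ge0 ?lee_fin ?d_ge0 ?x_ge0.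
Qed.

End Equivalence.

Theorem theorem1 (R : realType) (N : finType) (A : rel N)
    (s t : N) (S P : {set N}) (p : N -> nat) (d : N -> N -> R)
    (m : nat) (T : R) :
  s != t ->
  [disjoint S & P] ->
  s \notin S :|: P -> t \notin S :|: P ->
  (forall i : N, i \in S :|: P :|: [set s; t]) ->
  (forall i, i \in P -> (0 < p i)%N) ->
  (forall i j, A i j -> 0 < d i j) ->
  (forall x y z phi, L1_feasible A d s t S P m T x y z phi ->
     exists f, L2_feasible A d s t S P m T x y f phi) /\
  (forall x y f phi, L2_feasible A d s t S P m T x y f phi ->
     exists z, L1_feasible A d s t S P m T x y z phi) /\
  (forall v : R,
     (exists x y z phi, L1_feasible A d s t S P m T x y z phi /\
        objective P p y = v) <->
     (exists x y f phi, L2_feasible A d s t S P m T x y f phi /\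
        objective P p y = v)).
Proof.
move=> _ _ _ _ _ _ d_gt0.
have d_ge0 i j : A i j -> 0 <= d i j by move=> /d_gt0 /ltW.
split; [|split].
- by move=> x y z phi /(L1_feasible_residual d_ge0) feas; exists (residual T x z).
- by move=> x y f phi /(L2_feasible_residual d_ge0) feas; exists (residual T x f).
move=> v; split.
  move=> [x [y [z [phi [/(L1_feasible_residual d_ge0) feas <-]]]]].
  by exists x, y, (residual T x z), phi.
move=> [x [y [f [phi [/(L2_feasible_residual d_ge0) feas <-]]]]].
by exists x, y, (residual T x f), phi.
Qed.
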